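(* Assume $\delta=d$ and $\gamma\ge1$. Then $$\frac{q(z,w)}{z^\gamma w^d}\longrightarrow1\quad\text{as } (z,w)\in W_R,\ R\to\infty$$ (i.e. as $|z|\to\infty$ and $|w|/|z|^\alpha\to\infty$ when $\alpha>-\infty$, and as $|z|\to\infty$ with $w\ne0$ when $\alpha=-\infty$), and there is $R_0>1$ such that $f(W_R)\subset W_R$ for all $R\ge R_0$.
   Context: Let $p(z)=z^d+O(z^{d-1})$ be a monic polynomial of degree $\delta=d\ge 2$, and let $q(z,w)=b(z)w^d+(\text{terms of lower degree in } w)$ be a polynomial with $\deg_w q=d$, where $b$ is a monic polynomial of degree $\gamma$. Let $f(z,w)=(p(z),q(z,w))$. Define $\alpha=\max\{(n_j-\gamma)/(d-m_j)\}$ over monomials $z^{n_j}w^{m_j}$ appearing in $q$ with nonzero coefficient and $m_j<d$, and $\alpha=-\infty$ if $q(z,w)=b(z)w^d$. Let $W_R=\{(z,w):|z|>R,\ |w|>R|z|^\alpha\}$ if $\alpha>-\infty$, and $W_R=\{(z,w):|z|>R,\ w\ne0\}$ if $\alpha=-\infty$. *)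

From Stdlib Require Import Reals List.
Open Scope R_scope.

Definition Cx : Type := (R * R)%type.
Definition Czero : Cx := (0, 0).
Definition Cone : Cx := (1, 0).
Definition Cadd (a b : Cx) : Cx := (fst a + fst b, snd a + snd b).
Definition Copp (a : Cx) : Cx := (- fst a, - snd a).
Definition Cmul (a b : Cx) : Cx :=
  (fst a * fst b - snd a * snd b, fst a * snd b + snd a * fst b).
Definition Cinv (a : Cx) : Cx :=
  (fst a / (fst a ^ 2 + snd a ^ 2), - snd a / (fst a ^ 2 + snd a ^ 2)).
Definition Cdiv (a b : Cx) : Cx := Cmul a (Cinv b).
Definition Cmod (a : Cx) : R := sqrt (fst a ^ 2 + snd a ^ 2).
Fixpoint Cpow (a : Cx) (n : nat) : Cx :=
  match n with O => Cone | S k => Cmul a (Cpow a k) end.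

Definition Ceq_dec (a b : Cx) : {a = b} + {a <> b}.
Proof. decide equality; apply Req_EM_T. Defined.

Definition sum_upto (N : nat) (f : nat -> Cx) : Cx :=
  fold_right (fun k acc => Cadd (f k) acc) Czero (seq 0 (S N)).

Definition peval (N : nat) (a : nat -> Cx) (z : Cx) : Cx :=
  sum_upto N (fun n => Cmul (a n) (Cpow z n)).

Definition qeval (N M : nat) (c : nat -> nat -> Cx) (z w : Cx) : Cx :=
  sum_upto N (fun n => sum_upto M (fun m =>
    Cmul (c n m) (Cmul (Cpow z n) (Cpow w m)))).

(* Extended reals max, None = -infinity. *)
Definition omax (x : option R) (y : R) : option R :=
  match x with None => Some y | Some x' => Some (Rmax x' y) end.

(* alpha = max { (n_j - gamma)/(d - m_j) : c n_j m_j <> 0, m_j < d },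
   over n_j <= N (all nonzero coefficients have n_j <= N); None = -infinity. *)
Definition alpha_of (N d gamma : nat) (c : nat -> nat -> Cx) : option R :=
  fold_left (fun acc n =>
    fold_left (fun acc' m =>
      if Ceq_dec (c n m) Czero then acc'
      else omax acc' ((INR n - INR gamma) / (INR d - INR m)))
      (seq 0 d) acc)
    (seq 0 (S N)) None.

Definition inW (alpha : option R) (Rr : R) (z w : Cx) : Prop :=
  Cmod z > Rr /\
  match alpha with
  | Some a => Cmod w > Rr * Rpower (Cmod z) a
  | None => w <> Czero
  end.

(* Write q = q_tail + z^gamma w^d and p = p_tail + z^d.  The exponent
   alpha is the least one for which every monomial z^n w^m of q with m < d
   satisfies |z^n w^m| <= |z^gamma w^d| / R on W_R (lemmas [alpha_of_bound],
   [power_gap]); monomials z^n w^d with n < gamma are handled directly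
   ([pow_absorbs]).  Summing gives |q_tail| <= Kq |z^gamma w^d| / R
   ([q_tail_bound]), which is the first assertion ([q_asymptotic]).  For the
   second, |p(z)| is comparable to |z|^d ([p_growth]) and |q| to
   |z^gamma w^d| ([q_growth]); since |w| > R |z|^alpha, the bound
   |p(z)|^alpha <= 2^|alpha| |z|^(d alpha) gives |q| > R |p(z)|^alpha
   ([q_beats_p_power]), i.e. f maps W_R into itself ([W_invariant]). *)

From Stdlib Require Import Reals List Lia Lra Psatz.
From Coquelicot Require Complex Rcomplements.
Open Scope R_scope.

(** Complex arithmetic.  [Cx] and its operations coincide definitionally with
    Coquelicot's complex numbers, so the modulus facts are imported from there. *)

Lemma Cx_ext (a b : Cx) : fst a = fst b -> snd a = snd b -> a = b.
Proof. destruct a, b; simpl; intros; subst; reflexivity. Qed.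

Lemma Cmul_one_l a : Cmul Cone a = a.
Proof. apply Cx_ext; simpl; ring. Qed.

Lemma Cmod_mul a b : Cmod (Cmul a b) = Cmod a * Cmod b.
Proof. exact (Complex.Cmod_mult a b). Qed.

Lemma Cmod_triangle a b : Cmod (Cadd a b) <= Cmod a + Cmod b.
Proof. exact (Complex.Cmod_triangle a b). Qed.

Lemma Cmod_ge0 a : 0 <= Cmod a.
Proof. exact (Complex.Cmod_ge_0 a). Qed.

Lemma Cmod_opp a : Cmod (Copp a) = Cmod a.
Proof. exact (Complex.Cmod_opp a). Qed.

Lemma Cmod_zero : Cmod Czero = 0.
Proof. exact Complex.Cmod_0. Qed.

Lemma Cmod_pos a : a <> Czero -> 0 < Cmod a.
Proof. exact (proj1 (Complex.Cmod_gt_0 a)). Qed.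

Lemma Cmod_pos_neq a : 0 < Cmod a -> a <> Czero.
Proof. intros Ha ->. rewrite Cmod_zero in Ha. lra. Qed.

Lemma Cmod_pow a n : Cmod (Cpow a n) = Cmod a ^ n.
Proof. exact (Complex.Cmod_pow a n). Qed.

Lemma Cmod_div a b : b <> Czero -> Cmod (Cdiv a b) = Cmod a / Cmod b.
Proof.
  intro Hb. unfold Cdiv, Rdiv. rewrite Cmod_mul.
  exact (f_equal (Rmult (Cmod a)) (Complex.Cmod_inv b Hb)).
Qed.

Lemma Cmod_monomial a z w n m :
  Cmod (Cmul a (Cmul (Cpow z n) (Cpow w m))) = Cmod a * (Cmod z ^ n * Cmod w ^ m).
Proof. rewrite !Cmod_mul, !Cmod_pow. reflexivity. Qed.

Module ComplexField.
Import Complex.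
Lemma Cdiv_shift (S D : C) : D <> RtoC 0 ->
  Cplus (Cdiv (Cplus S D) D) (Copp (RtoC 1)) = Cdiv S D.
Proof. intro HD. field. exact HD. Qed.
End ComplexField.

Lemma Cdiv_shift S D : D <> Czero -> Cadd (Cdiv (Cadd S D) D) (Copp Cone) = Cdiv S D.
Proof. exact (ComplexField.Cdiv_shift S D). Qed.

Lemma perturbation_bounds S L : Cmod S <= Cmod L / 2 ->
  Cmod L / 2 <= Cmod (Cadd S L) <= 2 * Cmod L.
Proof.
  intro HS. pose proof (Cmod_ge0 S).
  assert (HL : L = Cadd (Cadd S L) (Copp S)) by (apply Cx_ext; simpl; ring).
  pose proof (Cmod_triangle (Cadd S L) (Copp S)) as Hlow.
  rewrite <- HL, Cmod_opp in Hlow.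
  pose proof (Cmod_triangle S L). lra.
Qed.

Lemma sum_upto_S N f : sum_upto (S N) f = Cadd (sum_upto N f) (f (S N)).
Proof.
  unfold sum_upto. rewrite seq_S, fold_right_app. cbn [fold_right].
  generalize (seq 0 (S N)) as l. induction l as [|k l IH]; cbn [fold_right].
  - apply Cx_ext; simpl; ring.
  - rewrite IH. apply Cx_ext; simpl; ring.
Qed.

Lemma sum_upto_ext N f g : (forall k, (k <= N)%nat -> f k = g k) ->
  sum_upto N f = sum_upto N g.
Proof.
  induction N as [|N IH]; intro Hfg.
  - unfold sum_upto; simpl. rewrite Hfg by lia. reflexivity.
  - rewrite !sum_upto_S, IH, Hfg by auto. reflexivity.
Qed.

Lemma sum_upto_agree_off N f g j : (j <= N)%nat -> (forall k, k <> j -> f k = g k) ->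
  sum_upto N f = Cadd (sum_upto N g) (Cadd (f j) (Copp (g j))).
Proof.
  induction N as [|N IH]; intros Hj Hfg.
  - assert (j = 0%nat) by lia; subst. unfold sum_upto; simpl.
    apply Cx_ext; simpl; ring.
  - rewrite !sum_upto_S. destruct (Nat.eq_dec j (S N)) as [->|Hne].
    + rewrite (sum_upto_ext N f g) by (intros; apply Hfg; lia).
      apply Cx_ext; simpl; ring.
    + rewrite IH, (Hfg (S N)) by (assumption || lia). apply Cx_ext; simpl; ring.
Qed.

Lemma Cmod_sum_upto N f : Cmod (sum_upto N f) <= sum_f_R0 (fun k => Cmod (f k)) N.
Proof.
  induction N as [|N IH].
  - unfold sum_upto; simpl. pose proof (Cmod_triangle (f 0%nat) Czero).
    rewrite Cmod_zero in *. lra.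
  - rewrite sum_upto_S. simpl. pose proof (Cmod_triangle (sum_upto N f) (f (S N))). lra.
Qed.

Lemma sum_mult_r f N x : sum_f_R0 f N * x = sum_f_R0 (fun k => f k * x) N.
Proof. rewrite Rmult_comm. apply scal_sum. Qed.

(** The exponent [alpha].  [dominates acc x] says that the running maximum
    [acc] is finite and at least [x]; once established it survives every
    further step of the folds defining [alpha_of]. *)

Definition dominates (acc : option R) (x : R) : Prop :=
  exists a, acc = Some a /\ x <= a.

Lemma omax_dominates_new acc y : dominates (omax acc y) y.
Proof. destruct acc; simpl; eexists; split; eauto using Rmax_r, Rle_refl. Qed.

Lemma omax_dominates_old acc y x : dominates acc x -> dominates (omax acc y) x.
Proof.
  intros [a [-> Hxa]]. simpl. eexists; split; [reflexivity|].
  eapply Rle_trans; [exact Hxa | apply Rmax_l].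
Qed.

Section FoldDominates.
Variables (A : Type) (F : option R -> A -> option R) (x : R).
Hypothesis F_keeps : forall acc e, dominates acc x -> dominates (F acc e) x.

Lemma fold_left_keeps l acc : dominates acc x -> dominates (fold_left F l acc) x.
Proof. revert acc; induction l; simpl; auto. Qed.

Lemma fold_left_reaches l acc e : In e l -> (forall acc', dominates (F acc' e) x) ->
  dominates (fold_left F l acc) x.
Proof.
  revert acc; induction l as [|e' l IH]; simpl; intros acc Hin He; [contradiction|].
  destruct Hin as [<-|Hin]; [apply fold_left_keeps, He | apply IH; auto].
Qed.
End FoldDominates.

Lemma alpha_of_bound N d gamma c n m : (n <= N)%nat -> (m < d)%nat -> c n m <> Czero ->
  dominates (alpha_of N d gamma c) ((INR n - INR gamma) / (INR d - INR m)).
Proof.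
  intros Hn Hm Hc. unfold alpha_of.
  set (x := (INR n - INR gamma) / (INR d - INR m)).
  set (row := fun (n0 : nat) (acc' : option R) (m0 : nat) =>
     if Ceq_dec (c n0 m0) Czero then acc'
     else omax acc' ((INR n0 - INR gamma) / (INR d - INR m0))).
  assert (row_keeps : forall n0 acc e, dominates acc x -> dominates (row n0 acc e) x).
  { intros n0 acc e H. unfold row. destruct Ceq_dec; auto using omax_dominates_old. }
  change (dominates (fold_left (fun acc n0 => fold_left (row n0) (seq 0 d) acc)
     (seq 0 (S N)) None) x).
  apply fold_left_reaches with (e := n).
  - intros acc n0. apply fold_left_keeps, row_keeps.
  - apply in_seq. lia.
  - intro acc. apply fold_left_reaches with (e := m); [apply row_keeps | apply in_seq; lia |].
    intro acc'. unfold row. destruct Ceq_dec; [contradiction | apply omax_dominates_new].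
Qed.

Lemma exp_le x y : x <= y -> exp x <= exp y.
Proof. intros [Hlt|Heq]; [left; apply exp_increasing, Hlt | rewrite Heq; apply Rle_refl]. Qed.

Lemma Rpower_pos x a : 0 < Rpower x a.
Proof. apply exp_pos. Qed.

Lemma Rpower_nat_mult Z a k : 0 < Z -> Rpower Z (INR k * a) = Rpower Z a ^ k.
Proof. intro HZ. rewrite Rmult_comm, <- Rpower_mult, Rpower_pow; auto using Rpower_pos. Qed.

Lemma pow_absorbs R Z n g : 1 <= R -> R < Z -> (n < g)%nat -> R * Z ^ n <= Z ^ g.
Proof.
  intros HR HRZ Hng.
  replace g with (n + (g - n))%nat by lia. rewrite pow_add.
  assert (HZ : Z <= Z ^ (g - n)) by (rewrite <- (pow_1 Z) at 1; apply Rle_pow; lia || lra).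
  assert (0 < Z ^ n) by (apply pow_lt; lra). nra.
Qed.

Lemma power_gap R Z W a n g k : 1 <= R -> 1 <= Z -> R * Rpower Z a < W ->
  (1 <= k)%nat -> INR n - INR g <= INR k * a -> R * Z ^ n <= Z ^ g * W ^ k.
Proof.
  intros HR HZ HW Hk Hgap.
  assert (HZn : Z ^ n = Z ^ g * Rpower Z (INR n - INR g)).
  { rewrite <- !Rpower_pow, <- Rpower_plus by lra. f_equal. ring. }
  assert (HRk : R <= R ^ k) by (rewrite <- (pow_1 R) at 1; apply Rle_pow; lia || lra).
  assert (Hexp : Rpower Z (INR n - INR g) <= Rpower Z (INR k * a)) by (apply Rle_Rpower; lra).
  assert (HWk : (R * Rpower Z a) ^ k <= W ^ k).
  { apply pow_incr. pose proof (Rpower_pos Z a). nra. }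
  rewrite Rpow_mult_distr, <- Rpower_nat_mult in HWk by lra.
  assert (0 < Z ^ g) by (apply pow_lt; lra).
  pose proof (Rpower_pos Z (INR n - INR g)).
  rewrite HZn, Rmult_comm, Rmult_assoc. apply Rmult_le_compat_l; [lra|].
  rewrite Rmult_comm. eapply Rle_trans; [|exact HWk].
  apply Rmult_le_compat; lra.
Qed.

Lemma Rpower_perturbation X Y a : 0 < X -> X / 2 <= Y <= 2 * X ->
  Rpower Y a <= Rpower 2 (Rabs a) * Rpower X a.
Proof.
  intros HX HY.
  set (t := Y / X).
  assert (HYt : Y = t * X) by (unfold t; field; lra).
  assert (Ht : 1 / 2 <= t <= 2) by (split; apply Rmult_le_reg_r with X; nra).
  rewrite HYt, <- Rpower_mult_distr by lra.
  apply Rmult_le_compat_r; [left; apply Rpower_pos|].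
  assert (Hlnt : Rabs (ln t) <= ln 2).
  { apply Rabs_le. split.
    - rewrite <- ln_Rinv by lra. apply Rcomplements.ln_le; lra.
    - apply Rcomplements.ln_le; lra. }
  unfold Rpower. apply exp_le.
  eapply Rle_trans; [apply Rle_abs|]. rewrite Rabs_mult.
  apply Rmult_le_compat_l; [apply Rabs_pos | exact Hlnt].
Qed.

Definition remove_coef1 (a : nat -> Cx) (n0 : nat) : nat -> Cx :=
  fun n => if Nat.eqb n n0 then Czero else a n.

Definition remove_coef2 (c : nat -> nat -> Cx) (n0 m0 : nat) : nat -> nat -> Cx :=
  fun n m => if andb (Nat.eqb n n0) (Nat.eqb m m0) then Czero else c n m.

Lemma peval_remove N a n0 z : (n0 <= N)%nat ->
  peval N a z = Cadd (peval N (remove_coef1 a n0) z) (Cmul (a n0) (Cpow z n0)).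
Proof.
  intro Hn0. unfold peval.
  rewrite (sum_upto_agree_off N _ (fun n => Cmul (remove_coef1 a n0 n) (Cpow z n)) n0 Hn0).
  - unfold remove_coef1. rewrite Nat.eqb_refl. f_equal. apply Cx_ext; simpl; ring.
  - intros n Hn. unfold remove_coef1. apply Nat.eqb_neq in Hn. rewrite Hn. reflexivity.
Qed.

Lemma qeval_remove N M c n0 m0 z w : (n0 <= N)%nat -> (m0 <= M)%nat ->
  qeval N M c z w = Cadd (qeval N M (remove_coef2 c n0 m0) z w)
                         (Cmul (c n0 m0) (Cmul (Cpow z n0) (Cpow w m0))).
Proof.
  intros Hn0 Hm0. unfold qeval.
  set (term := fun (c' : nat -> nat -> Cx) n m => Cmul (c' n m) (Cmul (Cpow z n) (Cpow w m))).
  set (c' := remove_coef2 c n0 m0).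
  change (sum_upto N (fun n => sum_upto M (term c n)) =
    Cadd (sum_upto N (fun n => sum_upto M (term c' n))) (term c n0 m0)).
  assert (Hrow : forall n, n <> n0 -> sum_upto M (term c n) = sum_upto M (term c' n)).
  { intros n Hn. apply sum_upto_ext. intros m _. unfold term, c', remove_coef2.
    apply Nat.eqb_neq in Hn. rewrite Hn. reflexivity. }
  assert (Hcol : forall m, m <> m0 -> term c n0 m = term c' n0 m).
  { intros m Hm. unfold term, c', remove_coef2. apply Nat.eqb_neq in Hm.
    rewrite Hm, Bool.andb_false_r. reflexivity. }
  assert (Hzero : term c' n0 m0 = Czero).
  { unfold term, c', remove_coef2. rewrite !Nat.eqb_refl. apply Cx_ext; simpl; ring. }
  rewrite (sum_upto_agree_off N _ _ n0 Hn0 Hrow), (sum_upto_agree_off M _ _ m0 Hm0 Hcol), Hzero.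
  apply Cx_ext; simpl; ring.
Qed.

Lemma Cmod_peval_le N a z :
  Cmod (peval N a z) <= sum_f_R0 (fun n => Cmod (a n) * Cmod z ^ n) N.
Proof.
  eapply Rle_trans; [apply Cmod_sum_upto|].
  right. apply sum_eq. intros n _. rewrite Cmod_mul, Cmod_pow. reflexivity.
Qed.

Lemma Cmod_qeval_le N M c z w : Cmod (qeval N M c z w) <=
  sum_f_R0 (fun n => sum_f_R0 (fun m => Cmod (c n m) * (Cmod z ^ n * Cmod w ^ m)) M) N.
Proof.
  eapply Rle_trans; [apply Cmod_sum_upto|].
  apply sum_Rle. intros n _. eapply Rle_trans; [apply Cmod_sum_upto|].
  right. apply sum_eq. intros m _. apply Cmod_monomial.
Qed.

Lemma inW_w_pos alpha R z w : 0 <= R -> inW alpha R z w -> 0 < Cmod w.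
Proof.
  intros HR [HZ HW]. destruct alpha as [a|].
  - pose proof (Rpower_pos (Cmod z) a). nra.
  - apply Cmod_pos, HW.
Qed.

(** The setting of the theorem: [p] monic of degree [d], [q = b(z) w^d + ...]
    with [b] monic of degree [gamma]. *)

Section SkewProduct.
Variables (d gamma N : nat) (pc : nat -> Cx) (c : nat -> nat -> Cx).
Hypothesis Hd : (2 <= d)%nat.
Hypothesis Hp_lead : pc d = Cone.
Hypothesis Hq_supp_z : forall n m, (N < n)%nat -> c n m = Czero.
Hypothesis Hq_supp_w : forall n m, (d < m)%nat -> c n m = Czero.
Hypothesis Hb_lead : c gamma d = Cone.
Hypothesis Hb_deg : forall n, (gamma < n)%nat -> c n d = Czero.

Let alpha := alpha_of N d gamma c.

Lemma monomial_dominated R z w n m : 1 <= R -> inW alpha R z w -> c n m <> Czero ->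
  ~ (n = gamma /\ m = d) ->
  R * (Cmod z ^ n * Cmod w ^ m) <= Cmod z ^ gamma * Cmod w ^ d.
Proof.
  intros HR HW Hc Hnm.
  pose proof (inW_w_pos alpha R z w ltac:(lra) HW) as HW0.
  destruct HW as [HZ HWa].
  assert (Hn : (n <= N)%nat) by (destruct (Nat.le_gt_cases n N); auto; contradict Hc; auto).
  assert (Hm : (m <= d)%nat) by (destruct (Nat.le_gt_cases m d); auto; contradict Hc; auto).
  destruct (Nat.eq_dec m d) as [->|Hmd].
  - assert (Hng : (n < gamma)%nat).
    { destruct (Nat.le_gt_cases n gamma); [lia | contradict Hc; auto]. }
    rewrite <- Rmult_assoc. apply Rmult_le_compat_r; [apply pow_le; lra|].
    apply pow_absorbs; lra || lia.
  - destruct (alpha_of_bound N d gamma c n m Hn ltac:(lia) Hc) as [a [Ha Hle]].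
    unfold alpha in HWa. rewrite Ha in HWa.
    assert (Hk : INR d - INR m = INR (d - m)) by (rewrite minus_INR; lia || lra).
    rewrite Hk in Hle.
    assert (Hk0 : 0 < INR (d - m)) by (apply lt_0_INR; lia).
    assert (Hgap : INR n - INR gamma <= INR (d - m) * a).
    { assert (INR n - INR gamma = INR (d - m) * ((INR n - INR gamma) / INR (d - m)))
        by (field; lra). nra. }
    pose proof (power_gap R (Cmod z) (Cmod w) a n gamma (d - m) HR ltac:(lra) HWa
      ltac:(lia) Hgap) as Hpow.
    replace (Cmod w ^ d) with (Cmod w ^ m * Cmod w ^ (d - m))
      by (rewrite <- pow_add; f_equal; lia).
    assert (0 <= Cmod w ^ m) by (apply pow_le; lra). nra.
Qed.

Lemma gamma_le_N : (gamma <= N)%nat.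
Proof.
  destruct (Nat.le_gt_cases gamma N) as [H|H]; [exact H|].
  exfalso. pose proof (Hq_supp_z gamma d H) as Hz. rewrite Hb_lead in Hz.
  injection Hz. lra.
Qed.

Definition p_tail : nat -> Cx := remove_coef1 pc d.
Definition q_tail : nat -> nat -> Cx := remove_coef2 c gamma d.

Definition Kp : R := sum_f_R0 (fun n => Cmod (pc n)) d.
Definition Kq : R := sum_f_R0 (fun n => sum_f_R0 (fun m => Cmod (c n m)) d) N.

Lemma Kp_ge0 : 0 <= Kp.
Proof. apply cond_pos_sum. intro n. apply Cmod_ge0. Qed.

Lemma Kq_ge0 : 0 <= Kq.
Proof. apply cond_pos_sum. intro n. apply cond_pos_sum. intro m. apply Cmod_ge0. Qed.

Lemma p_split z : peval d pc z = Cadd (peval d p_tail z) (Cpow z d).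
Proof. rewrite (peval_remove d pc d z (le_n d)), Hp_lead, Cmul_one_l. reflexivity. Qed.

Lemma q_split z w :
  qeval N d c z w = Cadd (qeval N d q_tail z w) (Cmul (Cpow z gamma) (Cpow w d)).
Proof.
  rewrite (qeval_remove N d c gamma d z w gamma_le_N (le_n d)), Hb_lead, Cmul_one_l.
  reflexivity.
Qed.

Lemma p_tail_bound z : 1 <= Cmod z -> Cmod (peval d p_tail z) <= Kp * Cmod z ^ (d - 1).
Proof.
  intro HZ. eapply Rle_trans; [apply Cmod_peval_le|].
  unfold Kp. rewrite sum_mult_r. apply sum_Rle. intros n Hn.
  unfold p_tail, remove_coef1. destruct (Nat.eqb_spec n d) as [->|Hnd].
  - rewrite Cmod_zero, Rmult_0_l. apply Rmult_le_pos; [apply Cmod_ge0 | apply pow_le; lra].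
  - apply Rmult_le_compat_l; [apply Cmod_ge0 | apply Rle_pow; lia || lra].
Qed.

Lemma q_tail_bound R z w : 1 <= R -> inW alpha R z w ->
  Cmod (qeval N d q_tail z w) <= Kq * (Cmod z ^ gamma * Cmod w ^ d / R).
Proof.
  intros HR HW.
  assert (HB : 0 <= Cmod z ^ gamma * Cmod w ^ d / R).
  { destruct HW as [HZ _]. pose proof (Cmod_ge0 w).
    apply Rmult_le_pos; [apply Rmult_le_pos; apply pow_le; lra | left; apply Rinv_0_lt_compat; lra]. }
  eapply Rle_trans; [apply Cmod_qeval_le|].
  unfold Kq. rewrite sum_mult_r. apply sum_Rle. intros n _.
  rewrite sum_mult_r. apply sum_Rle. intros m _.
  unfold q_tail, remove_coef2.
  destruct (andb (n =? gamma) (m =? d))%nat eqn:Hlead.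
  { rewrite Cmod_zero, Rmult_0_l. apply Rmult_le_pos; [apply Cmod_ge0 | exact HB]. }
  destruct (Ceq_dec (c n m) Czero) as [Hc|Hc].
  { rewrite Hc, Cmod_zero, !Rmult_0_l. apply Rle_refl. }
  apply Rmult_le_compat_l; [apply Cmod_ge0|].
  apply (Rcomplements.Rle_div_r (Cmod z ^ n * Cmod w ^ m) _ R); [lra|]. rewrite Rmult_comm.
  apply monomial_dominated; auto.
  intros [-> ->]. rewrite !Nat.eqb_refl in Hlead. discriminate.
Qed.

Lemma p_growth R z : 2 + 2 * Kp <= R -> R < Cmod z ->
  Cmod z ^ d / 2 <= Cmod (peval d pc z) <= 2 * Cmod z ^ d.
Proof.
  intros HR HZ. rewrite p_split, <- Cmod_pow.
  apply perturbation_bounds. rewrite Cmod_pow.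
  pose proof Kp_ge0.
  pose proof (p_tail_bound z ltac:(lra)) as Htail.
  assert (HZd : Cmod z ^ d = Cmod z * Cmod z ^ (d - 1))
    by (replace d with (S (d - 1)) at 1 by lia; reflexivity).
  assert (0 < Cmod z ^ (d - 1)) by (apply pow_lt; lra).
  nra.
Qed.

Lemma q_growth R z w : 1 <= R -> 2 * Kq <= R -> inW alpha R z w ->
  Cmod z ^ gamma * Cmod w ^ d / 2 <= Cmod (qeval N d c z w).
Proof.
  intros HR HK HW.
  pose proof (q_tail_bound R z w HR HW) as Htail.
  assert (HD : Cmod (Cmul (Cpow z gamma) (Cpow w d)) = Cmod z ^ gamma * Cmod w ^ d)
    by (rewrite Cmod_mul, !Cmod_pow; reflexivity).
  rewrite q_split, <- HD. eapply proj1, perturbation_bounds. rewrite HD.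
  set (X := Cmod z ^ gamma * Cmod w ^ d) in *.
  assert (HX : 0 <= X / R) by (rewrite <- HD; apply Rmult_le_pos;
    [apply Cmod_ge0 | left; apply Rinv_0_lt_compat; lra]).
  assert (HXR : X / R * R = X) by (field; lra).
  pose proof Kq_ge0. nra.
Qed.

Lemma q_asymptotic eps : eps > 0 -> exists R0, forall z w, inW alpha R0 z w ->
  Cmod (Cadd (Cdiv (qeval N d c z w) (Cmul (Cpow z gamma) (Cpow w d))) (Copp Cone)) < eps.
Proof.
  intros Heps. pose proof Kq_ge0.
  assert (HKe : 0 <= Kq / eps) by (apply Rcomplements.Rdiv_le_0_compat; lra).
  set (R0 := 1 + Kq / eps). exists R0. intros z w HW.
  assert (HR0 : 1 <= R0) by (unfold R0; lra).
  pose proof (q_tail_bound R0 z w HR0 HW) as Htail.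
  pose proof (inW_w_pos alpha R0 z w ltac:(lra) HW) as Hw.
  destruct HW as [HZ _].
  set (D := Cmul (Cpow z gamma) (Cpow w d)).
  assert (HD : Cmod D = Cmod z ^ gamma * Cmod w ^ d)
    by (unfold D; rewrite Cmod_mul, !Cmod_pow; reflexivity).
  assert (HD0 : 0 < Cmod D) by (rewrite HD; apply Rmult_lt_0_compat; apply pow_lt; lra).
  rewrite q_split, Cdiv_shift, Cmod_div by (apply Cmod_pos_neq; exact HD0).
  rewrite <- HD in Htail.
  apply Rle_lt_trans with (Kq / R0).
  - apply Rcomplements.Rle_div_l; [lra|].
    eapply Rle_trans; [exact Htail|]. right. field. lra.
  - apply Rcomplements.Rlt_div_l; [lra|].
    replace (eps * R0) with (eps + Kq) by (unfold R0; field; lra). lra.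
Qed.

Lemma square_le_pow x : 1 <= x -> x * x <= x ^ d.
Proof. intro Hx. replace (x * x) with (x ^ 2) by ring. apply Rle_pow; lia || lra. Qed.

Lemma q_beats_p_power a R z w : alpha = Some a ->
  2 + 2 * Kp + 2 * Kq + 2 * Rpower 2 (Rabs a) <= R -> inW alpha R z w ->
  R * Rpower (Cmod (peval d pc z)) a < Cmod (qeval N d c z w).
Proof.
  intros Ha HR HW.
  pose proof Kp_ge0. pose proof Kq_ge0. pose proof (Rpower_pos 2 (Rabs a)).
  pose proof (q_growth R z w ltac:(lra) ltac:(lra) HW) as Hq.
  pose proof (inW_w_pos alpha R z w ltac:(lra) HW) as Hw.
  destruct HW as [HZ HWa]. rewrite Ha in HWa.
  pose proof (p_growth R z ltac:(lra) HZ) as Hp.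
  set (Z := Cmod z) in *. set (W := Cmod w) in *.
  assert (HZd : 0 < Z ^ d) by (apply pow_lt; lra).
  set (E := Rpower Z a ^ d).
  assert (HE : 0 < E) by (apply pow_lt, Rpower_pos).
  assert (HpE : Rpower (Cmod (peval d pc z)) a <= Rpower 2 (Rabs a) * E).
  { unfold E. rewrite <- Rpower_nat_mult, <- Rpower_mult, Rpower_pow by lra.
    apply Rpower_perturbation; lra. }
  assert (HWd : R ^ d * E <= W ^ d).
  { unfold E. rewrite <- Rpow_mult_distr. apply pow_incr.
    pose proof (Rpower_pos Z a). nra. }
  assert (HRd : R * R <= R ^ d) by (apply square_le_pow; lra).
  assert (HZg : 1 <= Z ^ gamma) by (apply pow_R1_Rle; lra).
  assert (0 <= W ^ d) by (apply pow_le; lra).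
  assert (HRE : R * (Rpower 2 (Rabs a) * E) < R * R * E / 2).
  { replace (R * (Rpower 2 (Rabs a) * E)) with (R * E * Rpower 2 (Rabs a)) by ring.
    replace (R * R * E / 2) with (R * E * (R / 2)) by field.
    apply Rmult_lt_compat_l; [apply Rmult_lt_0_compat|]; lra. }
  assert (HpR : R * Rpower (Cmod (peval d pc z)) a <= R * (Rpower 2 (Rabs a) * E))
    by (apply Rmult_le_compat_l; lra).
  assert (HWq : W ^ d <= Z ^ gamma * W ^ d) by nra.
  nra.
Qed.

Lemma W_invariant : exists R0, R0 > 1 /\ forall R, R >= R0 -> forall z w,
  inW alpha R z w -> inW alpha R (peval d pc z) (qeval N d c z w).
Proof.
  pose proof Kp_ge0. pose proof Kq_ge0.
  set (Ca := match alpha with Some a => Rpower 2 (Rabs a) | None => 0 end).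
  assert (HCa : 0 <= Ca) by (unfold Ca; destruct alpha; [left; apply Rpower_pos | lra]).
  exists (2 + 2 * Kp + 2 * Kq + 2 * Ca). split; [lra|].
  intros R HR z w HW. split.
  - destruct HW as [HZ _].
    pose proof (p_growth R z ltac:(lra) HZ) as Hp.
    pose proof (square_le_pow (Cmod z) ltac:(lra)). nra.
  - pose proof (q_growth R z w ltac:(lra) ltac:(lra) HW) as Hq.
    pose proof (inW_w_pos alpha R z w ltac:(lra) HW) as Hw.
    unfold Ca in HR. destruct alpha as [a|] eqn:Ha.
    + apply (q_beats_p_power a); [exact Ha | lra | rewrite Ha; exact HW].
    + apply Cmod_pos_neq. destruct HW as [HZ _].
      assert (0 < Cmod z ^ gamma * Cmod w ^ d) by (apply Rmult_lt_0_compat; apply pow_lt; lra).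
      lra.
Qed.

End SkewProduct.

Theorem lemma6p2
  (d gamma N : nat) (pc : nat -> Cx) (c : nat -> nat -> Cx)
  (Hd : (2 <= d)%nat)
  (Hgamma : (1 <= gamma)%nat)
  (Hp_lead : pc d = Cone)
  (Hp_deg : forall n, (d < n)%nat -> pc n = Czero)
  (Hq_supp_z : forall n m, (N < n)%nat -> c n m = Czero)
  (Hq_supp_w : forall n m, (d < m)%nat -> c n m = Czero)
  (Hb_lead : c gamma d = Cone)
  (Hb_deg : forall n, (gamma < n)%nat -> c n d = Czero) :
  let p := peval d pc in
  let q := qeval N d c in
  let alpha := alpha_of N d gamma c in
  (forall eps, eps > 0 -> exists R0, forall z w, inW alpha R0 z w ->
      Cmod (Cadd (Cdiv (q z w) (Cmul (Cpow z gamma) (Cpow w d))) (Copp Cone)) < eps)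
  /\
  (exists R0, R0 > 1 /\ forall Rr, Rr >= R0 -> forall z w,
      inW alpha Rr z w -> inW alpha Rr (p z) (q z w)).
Proof.
  intros p q alpha. split.
  - exact (q_asymptotic d gamma N c Hd Hq_supp_z Hq_supp_w Hb_lead Hb_deg).
  - exact (W_invariant d gamma N pc c Hd Hp_lead Hq_supp_z Hq_supp_w Hb_lead Hb_deg).
Qed.
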